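(* Fix $\alpha\in(0,1]$ and $n\ge1$, and let $\mathcal F_n$, $\mathcal M^*$ and $\hat A$ be as in the context. Suppose that $\hat A$ is measurable and $f\in\mathcal F_n$. Then $f=f\,\mathbf 1_{\hat A}$ $m$-almost everywhere.
   Context: Let $(X,m)$ be a measure space, $A\subsetneq X$ measurable and $T:A\to X$ measurable such that: $H_0:=T(A)\setminus A$ is measurable; $m(A\cap T^{-1}H_0)>0$; $m(E)>0$ whenever $E\subseteq X$ is measurable with $m(T^{-1}E)>0$; and $T$ is locally finite-to-one (a nonsingular open dynamical system). Preimages are taken in $A$; $A_1=A\cap T^{-1}A$; $\mathbf 1_{A_1}\psi\circ T$ is $\psi\circ T$ on $A_1$ and $0$ elsewhere in $A$. Let $\psi_1,\dots,\psi_n\in L^\infty(A;m)$ with $\sum_j\psi_j=\mathbf 1_A$. Let $\mathcal F_n=\{0\le\varphi\in L^1(A;m):\int_{A_1}\varphi\,dm=\alpha,\ \int_A\varphi\,dm=1,\ \int_A[\mathbf 1_{A_1}\psi_j\circ T-\alpha\psi_j]\varphi\,dm=0,\ j=1,\dots,n\}$. Define $\mathcal M^*:\mathbb R^{n+1}\to L^\infty(A;m)$ by $\mathcal M^*\lambda=\lambda_0\mathbf 1_{A_1}+\sum_{j=1}^n\lambda_j(\mathbf 1_{A_1}\psi_j\circ T-\alpha\psi_j)$. The reduced domain $\hat A$ is obtained from $A$ by removing the support $\{\mathcal M^*\lambda\ne0\}$ of every function $\mathcal M^*\lambda$ with $\lambda\in\mathbb R^{n+1}$, $\lambda_0=0$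 and $\mathcal M^*\lambda\le0$ $m$-a.e. *)

From HB Require Import structures.
From mathcomp Require Import all_boot all_order all_algebra.
From mathcomp Require Import all_classical all_reals all_analysis.
Set Implicit Arguments. Unset Strict Implicit. Unset Printing Implicit Defensive.
Import Order.TTheory GRing.Theory Num.Theory.
Local Open Scope classical_set_scope.
Local Open Scope ring_scope.

Section OpenSystem.
Context {d : measure_display} {X : measurableType d} {R : realType}.

(* Preimages are taken inside A: T^{-1} E := A ∩ T @^-1` E. *)
Definition preA (A : set X) (T : X -> X) (E : set X) : set X := A `&` T @^-1` E.

Definition H0 (A : set X) (T : X -> X) : set X := (T @` A) `\` A.

Definition A1 (A : set X) (T : X -> X) : set X := preA A T A.

Definition locally_finite_to_one (A : set X) (T : X -> X) : Prop :=
  forall y : X, finite_set (preA A T [set y]).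

Definition open_system (m : {measure set X -> \bar R}) (A : set X) (T : X -> X) : Prop :=
  [/\ measurable A, A <> setT, measurable_fun A T,
      measurable (H0 A T)
    & [/\ (0 < m (preA A T (H0 A T)))%E,
        (forall E, measurable E -> (0 < m (preA A T E))%E -> (0 < m E)%E)
      & locally_finite_to_one A T]].

Definition Linfty_on (m : {measure set X -> \bar R}) (A : set X) (psi : X -> R) : Prop :=
  measurable_fun A psi /\ exists M : R, {ae m, forall x, A x -> `|psi x| <= M}.

Definition compT (A : set X) (T : X -> X) (psi : X -> R) (x : X) : R :=
  \1_(A1 A T) x * psi (T x).

Definition Fn (m : {measure set X -> \bar R}) (A : set X) (T : X -> X) (alpha : R)
    (n : nat) (psi : 'I_n -> X -> R) (phi : X -> R) : Prop :=
  [/\ measurable_fun A phi,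
      m.-integrable A (EFin \o phi),
      {ae m, forall x, A x -> 0 <= phi x}
    & [/\ (\int[m]_(x in A1 A T) (phi x)%:E = alpha%:E)%E,
      (\int[m]_(x in A) (phi x)%:E = 1%:E)%E
    & forall j : 'I_n,
        (\int[m]_(x in A) ((compT A T (psi j) x - alpha * psi j x) * phi x)%:E = 0)%E]].

(* M^* lambda, with lambda ∈ R^{n+1} indexed by 'I_n.+1 (lambda_0 = lam ord0,
   lambda_{j+1} = lam (lift ord0 j)). *)
Definition Mstar (A : set X) (T : X -> X) (alpha : R) (n : nat)
    (psi : 'I_n -> X -> R) (lam : 'I_n.+1 -> R) (x : X) : R :=
  lam ord0 * \1_(A1 A T) x
  + \sum_(j < n) lam (lift ord0 j) * (compT A T (psi j) x - alpha * psi j x).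

Definition admissible (m : {measure set X -> \bar R}) (A : set X) (T : X -> X)
    (alpha : R) (n : nat) (psi : 'I_n -> X -> R) (lam : 'I_n.+1 -> R) : Prop :=
  lam ord0 = 0 /\ {ae m, forall x, A x -> Mstar A T alpha psi lam x <= 0}.

Definition Msupp (A : set X) (T : X -> X) (alpha : R) (n : nat)
    (psi : 'I_n -> X -> R) (lam : 'I_n.+1 -> R) : set X :=
  [set x | A x /\ Mstar A T alpha psi lam x != 0].

Definition Ahat (m : {measure set X -> \bar R}) (A : set X) (T : X -> X)
    (alpha : R) (n : nat) (psi : 'I_n -> X -> R) : set X :=
  A `\` \bigcup_(lam in admissible m A T alpha psi) Msupp A T alpha psi lam.

End OpenSystem.

From HB Require Import structures.
From mathcomp Require Import all_boot all_order all_algebra.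
From mathcomp Require Import all_classical all_reals all_analysis measurable_realfun.
Import Order.TTheory GRing.Theory Num.Theory.
Local Open Scope classical_set_scope.
Local Open Scope ring_scope.

(* For an admissible multiplier lambda (lambda_0 = 0 and M^* lambda <= 0 a.e.),
   the moment constraints of F_n give \int_A (M^* lambda) f = 0, while
   (M^* lambda) f <= 0 a.e.; hence f = 0 a.e. on the support of M^* lambda.
   The union of these supports over all admissible lambda is uncountable, but
   lambda |-> (M^* lambda)(x) is linear and the admissible lambda live in
   R^(n+1), so finitely many of them span all others: already the finitely
   many supports of these cover A \ \hat A, and f vanishes a.e. on them. *)

Lemma exists_spanning_seq {K : fieldType} {vT : vectType K} (P : set vT) :
  exists2 s : seq vT, (forall v, v \in s -> P v) & forall v, P v -> v \in span s.
Proof.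
pose spans j := `[< exists2 s : seq vT, (forall v, v \in s -> P v) &
                                        \dim (span s) = j >].
have spans0 : exists j, spans j.
  by exists 0%N; apply/asboolP; exists [::]; rewrite // span_nil dimv0.
have spans_le j : spans j -> (j <= \dim {:vT})%N.
  by move=> /asboolP[s _ <-]; rewrite dimvS // subvf.
have [j /asboolP[s sP <-] jmax] := ex_maxnP spans0 spans_le.
exists s => // w Pw.
have ws_spans : spans (\dim (span (w :: s))).
  apply/asboolP; exists (w :: s) => // v.
  by rewrite inE => /orP[/eqP -> | /sP].
have sub : (span s <= span (w :: s))%VS.
  by apply: sub_span => v vs; rewrite inE vs orbT.
have /eqP -> : span s == span (w :: s) by rewrite eqEdim sub jmax.
by rewrite memv_span // mem_head.
Qed.

Lemma exists_spanning_family {K : fieldType} {k : nat} (P : set ('I_k -> K)) :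
  exists N (v : 'I_N -> 'I_k -> K), (forall j, P (v j)) /\
    forall l, P l -> exists c : 'I_N -> K, l = fun i => \sum_j c j * v j i.
Proof.
have [s sP spanP] := exists_spanning_seq [set w : 'rV[K]_k | P (fun i => w 0 i)].
exists (size s), (fun j i => s`_j 0 i); split=> [j|l Pl].
  by apply: sP; rewrite mem_nth.
pose w : 'rV[K]_k := \row_i l i.
have wl i : w 0 i = l i by rewrite mxE.
have /spanP/(coord_span (X := in_tuple s)) wE : P (fun i => w 0 i).
  by rewrite (_ : (fun i => _) = l) //; apply: funext => i; rewrite wl.
exists (fun j => coord (in_tuple s) j w); apply: funext => i.
by rewrite -wl {1}wE summxE; apply: eq_bigr => j _; rewrite mxE.
Qed.

Section integral_sign.
Context {d} {T : measurableType d} {R : realType} (mu : {measure set T -> \bar R}).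
Local Open Scope ereal_scope.

Lemma fin_num_integral_integrable (D : set T) (h : T -> R) :
  measurable D -> measurable_fun D h ->
  \int[mu]_(x in D) (h x)%:E \is a fin_num -> mu.-integrable D (EFin \o h).
Proof.
move=> mD mh; rewrite -integral_fin_num_abs // => habs.
by apply/integrableP; split => //; exact/measurable_EFinP.
Qed.

Lemma integral_le0_eq0 (D : set T) (h : T -> R) :
  measurable D -> mu.-integrable D (EFin \o h) ->
  {ae mu, forall x, D x -> (h x <= 0)%R} ->
  \int[mu]_(x in D) (h x)%:E = 0 -> {ae mu, forall x, D x -> h x = 0%R}.
Proof.
move=> mD ih hle0 h0.
have mh : measurable_fun D (EFin \o h) by exact: measurable_int ih.
have : \int[mu]_(x in D) `|(EFin \o h) x| = 0.
  rewrite (ae_eq_integral (fun x => (-1)%:E * (h x)%:E)) //.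
  - by rewrite integralZl // h0 mule0.
  - exact: measurableT_comp.
  - exact: measurable_funeM.
  apply: filterS hle0 => x hx Dx /=.
  by rewrite ler0_norm ?(hx Dx) // -EFinM mulN1r.
move/(ae_eq_integral_abs mu mD mh); apply: filterS => x hx Dx.
by have /= [] := hx Dx.
Qed.

End integral_sign.

Section open_system_Fn.
Context {d} {X : measurableType d} {R : realType} {m : {measure set X -> \bar R}}.
Context {A : set X} {T : X -> X} {alpha : R} {n : nat} {psi : 'I_n -> X -> R}.
Hypotheses (mA : measurable A) (mT : measurable_fun A T).

Lemma measurable_compT (g : X -> R) :
  measurable_fun A g -> measurable_fun A (compT A T g).
Proof.
move=> mg; have mA1 : measurable (A1 A T) by exact: mT.
have sA1A : A1 A T `<=` A by move=> x [].
rewrite -[X in measurable_fun X _](setDUK sA1A).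
apply/measurable_funU => //; first exact: measurableD.
split.
- apply: (eq_measurable_fun (g \o T)).
    by move=> x /set_mem A1x; rewrite /compT indicE mem_set // mul1r.
  apply: measurable_comp mg (measurable_funS mA sA1A mT) => //.
  by move=> _ [x [_ ATx] <-].
- apply: (eq_measurable_fun (cst (0 : R))); last exact: measurable_cst.
  by move=> x /set_mem [_ A1x]; rewrite /compT indicE memNset // mul0r.
Qed.

Lemma Mstar_lincomb (N : nat) (c : 'I_N -> R) (l : 'I_N -> 'I_n.+1 -> R) x :
  Mstar A T alpha psi (fun i => \sum_k c k * l k i) x =
  \sum_k c k * Mstar A T alpha psi (l k) x.
Proof.
rewrite /Mstar; under [RHS]eq_bigr do rewrite mulrDr mulr_sumr.
rewrite big_split /= mulr_suml; congr (_ + _).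
  by apply: eq_bigr => k _; rewrite mulrA.
rewrite exchange_big /=; apply: eq_bigr => j _.
by rewrite mulr_suml; apply: eq_bigr => k _; rewrite mulrA.
Qed.

Context {f : X -> R}.
Hypotheses (psi_meas : forall j, measurable_fun A (psi j))
  (Fn_f : Fn m A T alpha psi f).

Let constraint j x := (compT A T (psi j) x - alpha * psi j x) * f x.

Let measurable_constraint j : measurable_fun A (constraint j).
Proof.
have [mf _ _ _] := Fn_f.
apply: measurable_funM => //; apply: measurable_funB.
  exact: measurable_compT.
exact: measurable_funM.
Qed.

Let integral_constraint j : (\int[m]_(x in A) (constraint j x)%:E = 0)%E.
Proof. by have [_ _ _ [_ _]] := Fn_f; apply. Qed.

Let integrable_constraint j : m.-integrable A (EFin \o constraint j).
Proof. by apply: fin_num_integral_integrable; rewrite ?integral_constraint. Qed.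

Lemma Mstar_mul_integral0 (lam : 'I_n.+1 -> R) : lam ord0 = 0 ->
  m.-integrable A (fun x => (Mstar A T alpha psi lam x * f x)%:E) /\
  (\int[m]_(x in A) (Mstar A T alpha psi lam x * f x)%:E = 0)%E.
Proof.
move=> lam0.
have ME x : (Mstar A T alpha psi lam x * f x)%:E =
    (\sum_j (lam (lift ord0 j))%:E * (constraint j x)%:E)%E.
  rewrite /Mstar lam0 mul0r add0r mulr_suml -sumEFin.
  by apply: eq_bigr => j _; rewrite -EFinM mulrA.
have iZ (j : 'I_n) :
    m.-integrable A (fun x => (lam (lift ord0 j))%:E * (constraint j x)%:E)%E.
  by apply: integrableZl => //; exact: integrable_constraint.
split.
  apply: (eq_integrable mA (fun x => \sum_j _)%E); first by move=> x _; rewrite ME.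
  exact: integrable_sum.
rewrite (eq_integral _ _ (fun x _ => ME x)) integral_sum //.
rewrite big1 // => j _; rewrite integralZl //; last exact: integrable_constraint.
by rewrite integral_constraint mule0.
Qed.

Lemma Fn_ae_eq0_Msupp (lam : 'I_n.+1 -> R) :
  admissible m A T alpha psi lam ->
  {ae m, forall x, Msupp A T alpha psi lam x -> f x = 0}.
Proof.
move=> [lam0 Mle0]; have [_ _ f_ge0 _] := Fn_f.
have [iMf Mf0] := Mstar_mul_integral0 _ lam0.
have Mf_le0 : {ae m, forall x, A x -> Mstar A T alpha psi lam x * f x <= 0}.
  by apply: filterS2 Mle0 f_ge0 => x M0 f0 Ax; exact: mulr_le0_ge0 (M0 Ax) (f0 Ax).
have := integral_le0_eq0 _ _ _ mA iMf Mf_le0 Mf0.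
apply: filterS => x Mf0x [Ax Mx0].
by move/eqP: (Mf0x Ax); rewrite mulf_eq0 (negbTE Mx0) => /eqP.
Qed.

Lemma Fn_ae_eq0_notin_Ahat :
  {ae m, forall x, A x -> ~ Ahat m A T alpha psi x -> f x = 0}.
Proof.
have [N [lam [lam_adm lam_span]]] :=
  exists_spanning_family (admissible m A T alpha psi).
have : {ae m, forall x j, Msupp A T alpha psi (lam j) x -> f x = 0}.
  by apply: filter_forall => j; exact: Fn_ae_eq0_Msupp (lam_adm j).
apply: filterS => x f_Msupp Ax xNAhat; apply: contra_notP xNAhat => fx0.
split=> // -[l l_adm [_]]; have [c ->] := lam_span _ l_adm.
rewrite Mstar_lincomb big1 ?eqxx // => k _.
have [->|Mk] := eqVneq (Mstar A T alpha psi (lam k) x) 0; first by rewrite mulr0.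
by case: fx0; exact: (f_Msupp k).
Qed.

End open_system_Fn.

Theorem lemma5 (d : measure_display) (X : measurableType d) (R : realType)
    (m : {measure set X -> \bar R}) (A : set X) (T : X -> X)
    (alpha : R) (n : nat) (psi : 'I_n -> X -> R) (f : X -> R) :
  open_system m A T ->
  0 < alpha <= 1 ->
  (1 <= n)%N ->
  (forall j, Linfty_on m A (psi j)) ->
  {ae m, forall x, A x -> \sum_(j < n) psi j x = 1} ->
  measurable (Ahat m A T alpha psi) ->
  Fn m A T alpha psi f ->
  {ae m, forall x, A x -> f x = f x * \1_(Ahat m A T alpha psi) x}.
Proof.
move=> [mA _ mT _ _] _ _ psi_Linfty _ _ Fn_f.
have psi_meas j : measurable_fun A (psi j) by have [] := psi_Linfty j.
apply: filterS (Fn_ae_eq0_notin_Ahat mA mT psi_meas Fn_f) => x f0 Ax.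
rewrite indicE; have [_|xNAhat] := boolP (x \in Ahat m A T alpha psi).
  by rewrite mulr1.
by rewrite mulr0; apply: f0 Ax _ => /mem_set; apply/negP.
Qed.
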